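(* Let $n,b$ be integers with $1<n<b$, let $p=(d_k,\ldots,d_0)_b=n\cdot(d_{\sigma(k)},\ldots,d_{\sigma(0)})_b$ be an $(n,b,\sigma)$-permutiple with carries $c_0=0,c_1,\ldots,c_k$, let $S=\bigl((c_0,c_1),(c_1,c_2),\ldots,(c_{k-1},c_k),(c_k,c_0)\bigr)$ be its state-transition sequence, and let $s=(d_0,d_{\sigma(0)})(d_1,d_{\sigma(1)})\cdots(d_k,d_{\sigma(k)})$ be its permutiple string. If $\varphi$ is a symmetry of $p$, then the state-transition sequence of the permutiple string $$s_\varphi=(d_{\varphi(0)},d_{\sigma\varphi(0)})(d_{\varphi(1)},d_{\sigma\varphi(1)})\cdots(d_{\varphi(k)},d_{\sigma\varphi(k)})$$ is $S_\varphi=\bigl((c_{\varphi(0)},c_{\varphi(1)}),(c_{\varphi(1)},c_{\varphi(2)}),\ldots,(c_{\varphi(k-1)},c_{\varphi(k)}),(c_{\varphi(k)},c_{\varphi(0)})\bigr)$.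
   Context: For digits $0\le e_i<b$, $(e_k,\ldots,e_0)_b=\sum_i e_ib^i$ (leading zero digits allowed). For a permutation $\tau$ of $\{0,\ldots,k\}$, $(e_k,\ldots,e_0)_b$ is an $(n,b,\tau)$-permutiple if $(e_k,\ldots,e_0)_b=n\cdot(e_{\tau(k)},\ldots,e_{\tau(0)})_b$. Its carries are $c'_0=0$, $c'_{i+1}=\lfloor (ne_{\tau(i)}+c'_i)/b\rfloor$ for $0\le i\le k$ (one has $c'_{k+1}=0$, and $c'_i\le n-1$). Its permutiple string is the word $(e_0,e_{\tau(0)})(e_1,e_{\tau(1)})\cdots(e_k,e_{\tau(k)})$ of ordered digit pairs, and the state-transition sequence of this string is $\bigl((c'_0,c'_1),\ldots,(c'_{k-1},c'_k),(c'_k,c'_{k+1})\bigr)$, where $c'_{k+1}=0=c'_0$: the $i$-th input $(e_i,e_{\tau(i)})$ induces the transition from carry $c'_i$ to carry $c'_{i+1}$ (these satisfy $n e_{\tau(i)}-e_i+c'_i=b c'_{i+1}$). A permutation $\varphi$ of $\{0,\ldots,k\}$ is a symmetry of $p$ if reordering the inputs of $s$ by $\varphi$ gives again a permutiple string, i.e. $(d_{\varphi(k)},\ldots,d_{\varphi(0)})_b=n\cdot(d_{\sigma\varphi(k)},\ldots,d_{\sigma\varphi(0)})_b$, so that $s_\varphi$ is the permutiple string of this $(n,b,\varphi^{-1}\sigma\varphi)$-permutiple. *)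

From mathcomp Require Import all_boot all_fingroup.
Set Implicit Arguments. Unset Strict Implicit. Unset Printing Implicit Defensive.

Definition numval (b : nat) {k : nat} (e : 'I_k.+1 -> nat) : nat :=
  \sum_(i < k.+1) e i * b ^ i.

Definition is_permutiple (n b k : nat) (e : 'I_k.+1 -> nat) (tau : {perm 'I_k.+1}) : Prop :=
  (forall i, e i < b) /\ numval b e = n * numval b (fun i => e (tau i)).

Fixpoint carry (n b k : nat) (e : 'I_k.+1 -> nat) (tau : {perm 'I_k.+1}) (i : nat) : nat :=
  match i with
  | 0 => 0
  | i'.+1 => (n * e (tau (inord i')) + carry n b e tau i') %/ b
  end.

Definition perm_string (k : nat) (e : 'I_k.+1 -> nat) (tau : {perm 'I_k.+1}) : seq (nat * nat) :=
  [seq (e i, e (tau i)) | i <- enum 'I_k.+1].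

Fixpoint sts_from (n b c : nat) (s : seq (nat * nat)) : seq (nat * nat) :=
  match s with
  | [::] => [::]
  | xy :: s' => let c' := (n * xy.2 + c) %/ b in (c, c') :: sts_from n b c' s'
  end.

Definition state_transition_seq (n b : nat) (s : seq (nat * nat)) : seq (nat * nat) :=
  sts_from n b 0 s.

Definition is_symmetry (n b k : nat) (d : 'I_k.+1 -> nat) (sigma phi : {perm 'I_k.+1}) : Prop :=
  numval b (fun i => d (phi i)) = n * numval b (fun i => d (sigma (phi i))).

(* The carries of an (n,b,tau)-permutiple are determined digit by digit: by
   uniqueness of base-b expansions, c_i is the unique c < n with
   e_i = (n e_{tau i} + c) mod b, and the last carry vanishes.  Reordering the
   digits by a symmetry phi yields the permutiple (d o phi, phi^-1 sigma phi)
   (written [phi * sigma * phi^-1], as permutations compose left to right),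
   whose i-th digit equation is the phi(i)-th equation of d; hence its carries
   are c_{phi(i)}, and its state-transition sequence lists consecutive carries. *)
From mathcomp Require Import all_boot all_fingroup.
From mathcomp Require Import zify.

Set Implicit Arguments.
Unset Strict Implicit.
Unset Printing Implicit Defensive.

Lemma base_digit_inj b x y p q : x < b -> y < b -> x + b * p = y + b * q ->
  x = y /\ p = q.
Proof.
move=> xb yb E; have b0 : 0 < b := leq_ltn_trans (leq0n x) xb.
have := congr1 (divn^~ b) E; have := congr1 (modn^~ b) E.
rewrite /= ![b * _]mulnC ![_ + _ * b]addnC !modnMDl !divnMDl //.
by rewrite !modn_small // !divn_small // !addn0.
Qed.

Lemma base_expansion_inj b m (x y : nat -> nat) c c' :
  (forall i, i < m -> x i < b) -> (forall i, i < m -> y i < b) ->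
  \sum_(0 <= i < m) x i * b ^ i + c * b ^ m
    = \sum_(0 <= i < m) y i * b ^ i + c' * b ^ m ->
  (forall i, i < m -> x i = y i) /\ c = c'.
Proof.
elim: m x y => [|m IH] x y xb yb; first by rewrite !big_geq // !muln1.
have shift (z : nat -> nat) a : \sum_(0 <= i < m.+1) z i * b ^ i + a * b ^ m.+1
    = z 0 + b * (\sum_(0 <= i < m) z i.+1 * b ^ i + a * b ^ m).
  rewrite big_nat_recl // mulnDr big_distrr expnS muln1 -addnA; congr (_ + (_ + _)).
    by apply: eq_bigr => i _; rewrite expnS mulnCA.
  by rewrite mulnCA.
rewrite shift (shift y c') => /(base_digit_inj (xb 0 isT) (yb 0 isT)) [x0 E].
have [xy ->] := IH (x \o succn) (y \o succn) (fun i => xb i.+1) (fun i => yb i.+1) E.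
by split=> // -[|i] // /xy.
Qed.

Lemma numvalE b k (f : 'I_k.+1 -> nat) :
  numval b f = \sum_(0 <= i < k.+1) f (inord i) * b ^ i.
Proof. by rewrite big_mkord; apply: eq_bigr => i _; rewrite inord_val. Qed.

Section Carries.

Variables (n b k : nat) (e : 'I_k.+1 -> nat) (tau : {perm 'I_k.+1}).
Local Notation c := (carry n b e tau).

Lemma carry_lt : 0 < n -> (forall i, e i < b) -> forall j, c j < n.
Proof.
move=> n0 eb; have b0 : 0 < b := leq_ltn_trans (leq0n _) (eb ord0).
elim=> [|j IH] //=; rewrite ltn_divLR //.
have := eb (tau (inord j)); nia.
Qed.

Lemma mul_sum_carry m :
  n * \sum_(0 <= i < m) e (tau (inord i)) * b ^ i
  = \sum_(0 <= i < m) ((n * e (tau (inord i)) + c i) %% b) * b ^ i + c m * b ^ m.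
Proof.
elim: m => [|m IH]; first by rewrite !big_geq //= muln0.
rewrite !big_nat_recr //= mulnDr IH expnS.
move: (divn_eq (n * e (tau (inord m)) + c m) b).
set q := _ %/ b; set r := _ %% b; set S := \sum_(_ <= _ < _) _.
nia.
Qed.

Lemma permutiple_carries : is_permutiple n b e tau ->
  (forall i, (n * e (tau i) + c i) %% b = e i) /\ c k.+1 = 0.
Proof.
move=> [eb E]; have b0 : 0 < b := leq_ltn_trans (leq0n _) (eb ord0).
move: E; rewrite !numvalE mul_sum_carry -[LHS]addn0 -(mul0n (b ^ k.+1)).
case/esym/base_expansion_inj => [i _|i _|digits ->]; [exact: ltn_pmod | exact: eb|].
by split=> // i; have := digits i (ltn_ord i); rewrite inord_val.
Qed.

Lemma carry_unique i c' : 0 < n -> n <= b -> is_permutiple n b e tau ->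
  c' < n -> (n * e (tau i) + c') %% b = e i -> c' = c i.
Proof.
move=> n0 nb ep c'n; have [digit _] := permutiple_carries ep.
rewrite -(digit i) => /eqP; rewrite eqn_modDl => /eqP.
by rewrite !modn_small // (leq_trans _ nb) // carry_lt //; case: ep.
Qed.

Lemma sts_from_carry (x : nat -> nat) m l :
  sts_from n b (c m) [seq (x j, e (tau (inord j))) | j <- iota m l]
  = [seq (c j, c j.+1) | j <- iota m l].
Proof. by elim: l m => [|l IH] m //=; rewrite -(IH m.+1). Qed.

End Carries.

Lemma symmetry_permutiple n b k (d : 'I_k.+1 -> nat) (sigma phi : {perm 'I_k.+1}) :
  is_permutiple n b d sigma -> is_symmetry n b d sigma phi ->
  is_permutiple n b (d \o phi) (phi * sigma * phi^-1).
Proof.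
move=> [db _] sym; split=> [i|]; first exact: db.
rewrite /= sym; congr (_ * _); apply: eq_bigr => i _.
by rewrite /= !permM permKV.
Qed.

Lemma symmetry_carry n b k (d : 'I_k.+1 -> nat) (sigma phi : {perm 'I_k.+1}) (i : 'I_k.+1) :
  0 < n -> n <= b -> is_permutiple n b d sigma -> is_symmetry n b d sigma phi ->
  carry n b (d \o phi) (phi * sigma * phi^-1) i = carry n b d sigma (phi i).
Proof.
move=> n0 nb dp sym; have ep := symmetry_permutiple dp sym.
have [digit _] := permutiple_carries ep.
apply: (carry_unique n0 nb dp); first exact: carry_lt n0 ep.1 i.
by have := digit i; rewrite /= !permM permKV.
Qed.

Theorem corollary25 (n b k : nat) (d : 'I_k.+1 -> nat) (sigma phi : {perm 'I_k.+1}) :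
  1 < n -> n < b ->
  is_permutiple n b d sigma ->
  is_symmetry n b d sigma phi ->
  let c := carry n b d sigma in
  state_transition_seq n b [seq (d (phi i), d (sigma (phi i))) | i <- enum 'I_k.+1]
  = [seq (c (phi (inord i) : nat), c (phi (inord (i.+1 %% k.+1)) : nat)) | i <- iota 0 k.+1].
Proof.
move=> n1 nb dp sym c; pose tau := (phi * sigma * phi^-1)%g.
have e_tau i : d (phi (tau i)) = d (sigma (phi i)) by rewrite !permM permKV.
have [_ last0] := permutiple_carries (symmetry_permutiple dp sym).
have carry_phi (i : 'I_k.+1) : carry n b (d \o phi) tau i = c (phi i).
  exact: symmetry_carry (ltnW n1) (ltnW nb) dp sym.
have -> : [seq (d (phi i), d (sigma (phi i))) | i <- enum 'I_k.+1]
    = [seq (d (phi (inord j)), (d \o phi) (tau (inord j))) | j <- iota 0 k.+1].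
  by rewrite -val_enum_ord -map_comp; apply: eq_map => i /=; rewrite inord_val e_tau.
rewrite /state_transition_seq -[X in sts_from _ _ X _]/(carry n b (d \o phi) tau 0).
rewrite sts_from_carry.
apply/eq_in_map => j; rewrite mem_iota add0n => /andP [_ jk].
rewrite -carry_phi inordK //; congr (_, _).
move: jk; rewrite ltnS leq_eqVlt => /orP [/eqP -> | lt_jk].
  by rewrite modnn last0 (inord_val ord0) -carry_phi.
by rewrite modn_small ?ltnS // -carry_phi inordK.
Qed.
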